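(* Let $G$ be a graph with $n$ vertices, $m$ edges, and maximum degree at most $\Delta$, where $\Delta$ is a positive integer. If $d\in\{0,1,\ldots,\Delta-1\}$ is such that $$\frac{2m}{n}\in\left[\frac{2\Delta d}{\Delta+d},\ \frac{2\Delta(d+1)}{\Delta+d+1}\right],$$ then $$irr(G)\leq d(d+1)n+\frac{1}{\Delta}\left(\Delta^2-(2d+1)\Delta-d^2-d\right)m.$$
   Context: All graphs are finite, simple and undirected. For a graph $G$ with edge set $E(G)$ and vertex degrees $d_G(u)$, the irregularity (in the sense of Albertson) is $irr(G)=\sum_{uv\in E(G)}|d_G(u)-d_G(v)|$. *)

From mathcomp Require Import all_boot all_order all_algebra.
Set Implicit Arguments. Unset Strict Implicit. Unset Printing Implicit Defensive.
Import Order.TTheory GRing.Theory Num.Theory.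

Definition simple_graph (T : finType) (e : rel T) : Prop :=
  symmetric e /\ irreflexive e.

Definition deg (T : finType) (e : rel T) (x : T) : nat := #|[set y | e x y]|.

Definition edges (T : finType) (e : rel T) : {set {set T}} :=
  [set [set x; y] | x in T, y in T & e x y].

Definition nedges (T : finType) (e : rel T) : nat := #|edges e|.

(* Albertson irregularity: sum over edges uv of |d(u) - d(v)|; each unordered
   edge is counted twice among ordered adjacent pairs, hence the halving. *)
Definition irr (T : finType) (e : rel T) : rat :=
  (\sum_(x : T) \sum_(y : T | e x y)
      `|(deg e x)%:R - (deg e y)%:R| : rat) / 2.

From mathcomp Require Import all_boot all_order all_algebra.
Import Order.TTheory GRing.Theory Num.Theory.
From mathcomp Require Import ring lra zify.

Set Implicit Arguments.
Unset Strict Implicit.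
Unset Printing Implicit Defensive.

(* Write c = d(d+1) and beta = Delta - (2d+1) - c/Delta; the
   coefficient of m in the theorem is exactly beta.  The heart of the proof is
   a bound on a single edge: for degrees 1 <= a, b <= Delta,
       |a - b| <= c/a + c/b + beta,
   which follows from c/a >= 2d+1-a (i.e. (a-d)(a-d-1) >= 0 for integral a)
   and c/b >= c/Delta.  Summing over the ordered adjacent pairs (x,y), the
   terms c/deg x and c/deg y contribute the same amount by symmetry, namely
   at most c per non-isolated vertex, while the constant beta is counted
   2m times by the handshake lemma; this gives 2 irr(G) <= 2cn + 2 beta m. *)

Local Open Scope ring_scope.

Section EdgeBound.
Variable R : realFieldType.

Lemma coef_split (D d : nat) : (0 < D)%N ->
  (D%:R ^+ 2 - (2 * d%:R + 1) * D%:R - d%:R ^+ 2 - d%:R) / D%:R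
    = D%:R - (2 * d%:R + 1) - d%:R * d.+1%:R / D%:R :> R.
Proof.
move=> D_gt0; have D0 : D%:R != 0 :> R by rewrite pnatr_eq0 -lt0n.
by rewrite -natr1; field.
Qed.

(* Since there is no integer strictly between d and d+1, (a-d)(a-d-1) >= 0,
   i.e. d(d+1)/a >= 2d+1-a for every positive integer a. *)
Lemma recip_lower (a d : nat) : (0 < a)%N ->
  2 * d%:R + 1 - a%:R <= d%:R * d.+1%:R / a%:R :> R.
Proof.
move=> a_gt0; rewrite ler_pdivlMr ?ltr0n // -natr1.
have [a_le_d | d_lt_a] := leqP a d.
  have : a%:R <= d%:R :> R by rewrite ler_nat.
  nra.
have : d%:R + 1 <= a%:R :> R by rewrite natr1 ler_nat.
nra.
Qed.

Lemma gap_le_ordered (a b D d : nat) : (0 < a)%N -> (a <= b)%N -> (b <= D)%N ->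
  b%:R - a%:R <= d%:R * d.+1%:R / a%:R + d%:R * d.+1%:R / b%:R
                 + (D%:R - (2 * d%:R + 1) - d%:R * d.+1%:R / D%:R) :> R.
Proof.
move=> a_gt0 ab bD.
have b_gt0 : (0 < b)%N by apply: leq_trans ab.
have c_ge0 : 0 <= d%:R * d.+1%:R :> R by rewrite mulr_ge0.
have cD_le_cb : d%:R * d.+1%:R / D%:R <= d%:R * d.+1%:R / b%:R :> R.
  by rewrite ler_wpM2l // lef_pV2 ?posrE ?ltr0n ?ler_nat //; lia.
have bD' : b%:R <= D%:R :> R by rewrite ler_nat.
have := recip_lower d a_gt0; lra.
Qed.

Lemma gap_le (a b D d : nat) :
  (0 < a)%N -> (0 < b)%N -> (a <= D)%N -> (b <= D)%N ->
  `|a%:R - b%:R| <= d%:R * d.+1%:R / a%:R + d%:R * d.+1%:R / b%:R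
                   + (D%:R - (2 * d%:R + 1) - d%:R * d.+1%:R / D%:R) :> R.
Proof.
wlog ab : a b / (a <= b)%N => [sym_case a_gt0 b_gt0 aD bD | a_gt0 _ _ bD].
  have [ab | /ltnW ba] := leqP a b; first exact: sym_case.
  by rewrite distrC (addrC (_ / a%:R)); apply: sym_case.
by rewrite distrC ger0_norm ?subr_ge0 ?ler_nat //; apply: gap_le_ordered.
Qed.

End EdgeBound.

Section Counting.
Variables (T : finType) (e : rel T).
Hypothesis e_sym : symmetric e.
Hypothesis e_irr : irreflexive e.

Lemma sum_adj_const (V : nmodType) (x : T) (k : V) :
  \sum_(y | e x y) k = k *+ deg e x.
Proof. by rewrite sumr_const /deg cardsE. Qed.

Lemma deg_gt0 {x y : T} : e x y -> (0 < deg e x)%N.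
Proof. by move=> exy; rewrite /deg card_gt0; apply/set0Pn; exists y; rewrite inE. Qed.

Lemma sum_adj_swap (V : nmodType) (F : T -> V) :
  \sum_x \sum_(y | e x y) F y = \sum_x \sum_(y | e x y) F x.
Proof.
rewrite (exchange_big_dep xpredT) //=.
by apply: eq_bigr => y _; apply: eq_bigl => x; rewrite e_sym.
Qed.

Lemma adj_pairs_over_edge {x y : T} : e x y ->
  [set p : T * T | e p.1 p.2 && ([set p.1; p.2] == [set x; y])]
    = [set (x, y); (y, x)].
Proof.
move=> exy; apply/setP => -[a b]; rewrite !inE /=.
apply/andP/idP => [[eab /eqP Eab] | /orP [] /eqP [-> ->]]; last 2 first.
- by rewrite exy.
- by rewrite e_sym exy setUC.
have /set2P a_xy : a \in [set x; y] by rewrite -Eab set21.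
have /set2P b_xy : b \in [set x; y] by rewrite -Eab set22.
have ab : a != b by apply: contraTneq eab => ->; rewrite e_irr.
by case: a_xy b_xy ab => -> [] ->; rewrite ?eqxx ?orbT.
Qed.

Lemma handshake : (\sum_(x : T) deg e x = 2 * nedges e)%N.
Proof.
have -> : \sum_(x : T) deg e x = \sum_(x : T) \sum_(y | e x y) 1.
  by apply: eq_bigr => x _; rewrite /deg sum1_card cardsE.
rewrite (pair_big_dep xpredT (fun x y => e x y) (fun _ _ => 1)) /=.
rewrite (partition_big (fun p : T * T => [set p.1; p.2]) (mem (edges e))) /=;
  last by move=> [x y] /= exy; apply/imset2P; exists x y; rewrite ?inE.
rewrite /nedges -sum1_card big_distrr /=.
apply: eq_bigr => E /imset2P [x y _]; rewrite inE => /andP [_ exy] ->.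
have xy : x != y by apply: contraTneq exy => ->; rewrite e_irr.
rewrite (eq_bigl (mem [set (x, y); (y, x)])) => [|p]; last first.
  by rewrite -[RHS]/(p \in _) -(adj_pairs_over_edge exy) inE.
by rewrite sum1_card cards2 xpair_eqE (negbTE xy).
Qed.

(* Each vertex x contributes deg x * (c / deg x) <= c, so the sum of c/deg x
   over ordered adjacent pairs is at most c times the number of vertices. *)
Lemma sum_adj_recip_deg (R : numFieldType) (c : R) : 0 <= c ->
  \sum_x \sum_(y | e x y) c / (deg e x)%:R <= c * #|T|%:R.
Proof.
move=> c_ge0; rewrite mulr_natr -sumr_const; apply: ler_sum => x _.
rewrite sum_adj_const; have [->|deg_ne0] := eqVneq (deg e x) 0%N.
  by rewrite mulr0n.
by rewrite -[_ / _ *+ _]mulr_natr divfK // pnatr_eq0.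
Qed.

End Counting.

Theorem theorem1 (T : finType) (e : rel T) (Delta d : nat) :
  simple_graph e ->
  (0 < #|T|)%N ->
  (0 < Delta)%N ->
  (forall x : T, (deg e x <= Delta)%N) ->
  (d < Delta)%N ->
  (2 * Delta%:R * d%:R) / (Delta%:R + d%:R) <= 2 * (nedges e)%:R / (#|T|%:R) :> rat ->
  2 * (nedges e)%:R / (#|T|%:R) <= (2 * Delta%:R * d.+1%:R) / (Delta%:R + d.+1%:R) :> rat ->
  irr e <= d%:R * d.+1%:R * (#|T|)%:R
           + (Delta%:R ^+ 2 - (2 * d%:R + 1) * Delta%:R - d%:R ^+ 2 - d%:R)
             / Delta%:R * (nedges e)%:R.
Proof.
move=> [e_sym e_irr] _ Delta_gt0 deg_le _ _ _.
rewrite coef_split //; set c : rat := d%:R * d.+1%:R; set beta := _ - c / _.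
have edge_le x y : e x y -> `|(deg e x)%:R - (deg e y)%:R|
    <= c / (deg e x)%:R + c / (deg e y)%:R + beta.
  move=> exy; have eyx : e y x by rewrite e_sym.
  by apply: gap_le; rewrite ?deg_le ?(deg_gt0 exy) ?(deg_gt0 eyx).
clearbody beta.
have const_sum : \sum_x \sum_(y | e x y) beta = beta * (nedges e)%:R * 2.
  under eq_bigr => x _ do rewrite sum_adj_const.
  by rewrite sumrMnr handshake // -[beta *+ _]mulr_natr natrM mulrA mulrAC.
have recip_sum : \sum_x \sum_(y | e x y) c / (deg e x)%:R <= c * #|T|%:R.
  by apply: sum_adj_recip_deg; rewrite mulr_ge0.
rewrite /irr ler_pdivrMr //.
apply: le_trans (ler_sum _ (fun x _ => ler_sum _ (@edge_le x))) _.
under eq_bigr => x _ do rewrite !big_split /=.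
rewrite !big_split /= (sum_adj_swap e_sym (fun y => c / (deg e y)%:R)) const_sum.
lra.
Qed.
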